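(* Let $q=2^m\geq 4$ with $m$ a positive integer. Let $\delta\in\mathbb{F}_{q^2}$ and $b\in\mathbb{F}_q^*$ satisfy $b^4\,\mathrm{Tr}_{q^2/q}(\delta)=1$. Then the compositional inverse of $$P(x)=b(x^q+x+\delta)^{q(2q+3)/4}+x$$ over $\mathbb{F}_{q^2}$ is $$P^{-1}(x)=x+b\left(\mathrm{Tr}_{q^2/q}(\delta)^{-1}(x^q+x)^2+\delta^{q+1}\mathrm{Tr}_{q^2/q}(\delta)^{-1}+\delta\right)^{q(2q+3)/4}.$$
   Context: $\mathrm{Tr}_{q^2/q}(y)=y+y^q$. The compositional inverse of a permutation polynomial $f$ of $\mathbb{F}_{Q}$ is the unique polynomial $f^{-1}$ (modulo $x^Q-x$) with $f(f^{-1}(c))=f^{-1}(f(c))=c$ for all $c\in\mathbb{F}_Q$; in particular the statement includes that $P$ permutes $\mathbb{F}_{q^2}$. *)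

From HB Require Import structures.
From mathcomp Require Import all_boot all_order all_algebra all_field.
Set Implicit Arguments. Unset Strict Implicit. Unset Printing Implicit Defensive.
Import GRing.Theory.
Local Open Scope ring_scope.

Definition trq2q (F : ringType) (q : nat) (y : F) : F := y + y ^+ q.

(* The exponent q(2q+3)/4 (an integer since 4 | q when q = 2^m, m >= 2). *)
Definition eexp (q : nat) : nat := ((q * (2 * q + 3)) %/ 4)%N.

Definition Ppoly (F : fieldType) (q : nat) (b delta : F) (x : F) : F :=
  b * (x ^+ q + x + delta) ^+ eexp q + x.

Definition Pinv (F : fieldType) (q : nat) (b delta : F) (x : F) : F :=
  x + b * ((trq2q q delta)^-1 * (x ^+ q + x) ^+ 2
           + delta ^+ q.+1 * (trq2q q delta)^-1 + delta) ^+ eexp q.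

From HB Require Import structures.
From mathcomp Require Import all_boot all_order all_algebra all_field.
From mathcomp Require Import ring.

(* Write Tr for [trq2q q], T := Tr delta and e := q(2q+3)/4.  If Tr y = T then
   y^(4e) = y^2 y^(3q) because y^(q^2) = y, so in characteristic 2
   (b Tr(y^e))^4 = b^4 T (y^(q+1))^2 = (y^(q+1))^2: the map y |-> b Tr(y^e) is a
   square root of the norm.  Both P and the claimed inverse apply the power map to
   some u + delta with u in F_q, whose norm is u^2 + u T + delta^(q+1); hence Tr P(x)
   and Tr P^-1(x) are explicit functions of Tr x, and each map undoes the other. *)

Set Implicit Arguments.
Unset Strict Implicit.
Unset Printing Implicit Defensive.

Import GRing.Theory.
Local Open Scope ring_scope.

Section Char2.

Variable F : fieldType.
Hypothesis F2 : 2 \in [pchar F].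

Lemma exprD_pow2_pchar2 k (x y : F) :
  (x + y) ^+ (2 ^ k) = x ^+ (2 ^ k) + y ^+ (2 ^ k).
Proof. by apply: exprDn_pchar; rewrite pnatX (eq_pnat _ (pcharf_eq F2)) pnat_id. Qed.

Lemma sqrrD_pchar2 (x y : F) : (x + y) ^+ 2 = x ^+ 2 + y ^+ 2.
Proof. exact: (exprD_pow2_pchar2 1). Qed.

Lemma sqrf_pchar2_inj : injective (fun x : F => x ^+ 2).
Proof. exact: fmorph_inj (pFrobenius_aut F2). Qed.

End Char2.

Lemma eexp_mul4 k : (2 <= k)%N ->
  (eexp (2 ^ k) * 4 = 2 ^ k * 2 ^ k * 2 + 2 ^ k * 3)%N.
Proof.
move=> k2; rewrite /eexp divnK; first ring.
by rewrite dvdn_mulr // (dvdn_exp2l 2 k2).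
Qed.

Section RelativeTrace.

Variables (F : fieldType) (k : nat).
Hypothesis F2 : 2 \in [pchar F].
Local Notation q := (2 ^ k)%N.
Hypothesis exprqK : forall x : F, x ^+ q ^+ q = x.
Local Notation tr := (trq2q q).

Lemma exprqD (x y : F) : (x + y) ^+ q = x ^+ q + y ^+ q.
Proof. exact: exprD_pow2_pchar2. Qed.

Lemma trq2qD (x y : F) : tr (x + y) = tr x + tr y.
Proof. by rewrite /trq2q exprqD addrACA. Qed.

Lemma trq2qMl (a x : F) : a ^+ q = a -> tr (a * x) = a * tr x.
Proof. by move=> aq; rewrite /trq2q exprMn aq mulrDr. Qed.

Lemma trq2q_fixed (a : F) : a ^+ q = a -> tr a = 0.
Proof. by move=> aq; rewrite /trq2q aq addrr_pchar2. Qed.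

Lemma exprq_trq2q (x : F) : tr x ^+ q = tr x.
Proof. by rewrite /trq2q exprqD exprqK addrC. Qed.

Lemma exprq_norm (x : F) : x ^+ q.+1 ^+ q = x ^+ q.+1.
Proof. by rewrite exprAC exprS exprqK -exprSr. Qed.

End RelativeTrace.

Section CompositionalInverse.

Variables (F : fieldType) (k : nat) (delta b : F).
Hypotheses (F2 : 2 \in [pchar F]) (k2 : (2 <= k)%N).
Local Notation q := (2 ^ k)%N.
Hypothesis exprqK : forall x : F, x ^+ q ^+ q = x.
Local Notation tr := (trq2q q).
Local Notation T := (tr delta).
Local Notation e := (eexp q).
Hypotheses (bq : b ^+ q = b) (b4T : b ^+ 4 * T = 1).

Lemma sqr_trq2q_exp y : tr y = T -> (b * tr (y ^+ e)) ^+ 2 = y ^+ q.+1.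
Proof.
move=> trT; apply: (sqrf_pchar2_inj F2) => /=.
have y4 : y ^+ e ^+ 4 = y ^+ 2 * y ^+ q ^+ 3.
  by rewrite -exprM eexp_mul4 // exprD !exprM exprqK.
have yq4 : y ^+ e ^+ q ^+ 4 = y ^+ q ^+ 2 * y ^+ 3.
  by rewrite exprAC y4 exprMn (exprAC y 2 q) (exprAC (y ^+ q) 3 q) exprqK.
have expr4D : forall x z : F, (x + z) ^+ 4 = x ^+ 4 + z ^+ 4.
  exact: exprD_pow2_pchar2 F2 2.
rewrite -exprM exprMn expr4D y4 yq4 [y ^+ q.+1]exprS -[RHS]mul1r -b4T -trT.
by rewrite /trq2q; ring.
Qed.

Lemma sqr_trq2q_exp_shift u : u ^+ q = u ->
  (b * tr ((u + delta) ^+ e)) ^+ 2 = u ^+ 2 + u * T + delta ^+ q.+1.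
Proof.
move=> uq; rewrite sqr_trq2q_exp; last by rewrite trq2qD // trq2q_fixed // add0r.
by rewrite [_ ^+ q.+1]exprS exprqD // uq [delta ^+ q.+1]exprS /trq2q; ring.
Qed.

Lemma trq2q_delta_neq0 : T != 0.
Proof. by apply: contra_eq_neq b4T => ->; rewrite mulr0 eq_sym oner_neq0. Qed.

Lemma PpolyE x : Ppoly q b delta x = b * (tr x + delta) ^+ e + x.
Proof. by rewrite /Ppoly /trq2q [x ^+ q + x]addrC. Qed.

Lemma PinvE x :
  Pinv q b delta x = x + b * ((tr x ^+ 2 + delta ^+ q.+1) / T + delta) ^+ e.
Proof. by rewrite /Pinv /trq2q [x ^+ q + x]addrC mulrDl [_^-1 * _]mulrC. Qed.

Lemma Pinv_Ppoly : cancel (Ppoly q b delta) (Pinv q b delta).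
Proof.
move=> x; rewrite PpolyE PinvE; set s := tr x; set z := (s + delta) ^+ e.
have trz := sqr_trq2q_exp_shift (exprq_trq2q F2 exprqK x).
have -> : (tr (b * z + x) ^+ 2 + delta ^+ q.+1) / T = s.
  rewrite trq2qD // trq2qMl // sqrrD_pchar2 // trz -/s.
  have -> : s ^+ 2 + s * T + delta ^+ q.+1 + s ^+ 2 + delta ^+ q.+1
            = s * T + (s ^+ 2 + delta ^+ q.+1) *+ 2 by ring.
  by rewrite mulrn_pchar // addr0 mulfK // trq2q_delta_neq0.
by rewrite -/z addrAC addrr_pchar2 // add0r.
Qed.

Lemma Ppoly_Pinv : cancel (Pinv q b delta) (Ppoly q b delta).
Proof.
move=> v; rewrite PinvE PpolyE; set s := tr v.
set A := (s ^+ 2 + delta ^+ q.+1) / T; set z := (A + delta) ^+ e.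
have Aq : A ^+ q = A.
  by rewrite exprMn exprqD // exprVn exprq_norm // exprq_trq2q // exprAC exprq_trq2q.
have AT : A * T = s ^+ 2 + delta ^+ q.+1 by rewrite mulfVK // trq2q_delta_neq0.
have trz : b * tr z = A + s.
  apply: (sqrf_pchar2_inj F2); rewrite /= sqr_trq2q_exp_shift // AT.
  by rewrite -!addrA addrr_pchar2 // addr0 [RHS]sqrrD_pchar2.
rewrite trq2qD // trq2qMl // trz -/s [s + _]addrCA addrr_pchar2 // addr0.
by rewrite -/z addrCA addrr_pchar2 // addr0.
Qed.

End CompositionalInverse.

Theorem theorem3p3 (m : nat) (F : finFieldType)
  (hm : (2 <= m)%N) (hF : #|F| = ((2 ^ m) ^ 2)%N)
  (delta b : F) (hbq : b ^+ (2 ^ m) = b) (hb0 : b != 0)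
  (htr : b ^+ 4 * trq2q (2 ^ m) delta = 1) :
  bijective (Ppoly (2 ^ m) b delta) /\
  cancel (Ppoly (2 ^ m) b delta) (Pinv (2 ^ m) b delta) /\
  cancel (Pinv (2 ^ m) b delta) (Ppoly (2 ^ m) b delta).
Proof.
(* [hb0] is implied by [htr]. *)
have F2 : 2 \in [pchar F] by apply: (@card_finPcharP _ 2 (m * 2)); rewrite ?hF ?expnM.
have exprqK (x : F) : x ^+ (2 ^ m) ^+ (2 ^ m) = x by rewrite -exprM mulnn -hF expf_card.
have PK := Pinv_Ppoly F2 hm exprqK hbq htr.
have PinvK := Ppoly_Pinv F2 hm exprqK hbq htr.
by split; [exact: Bijective PK PinvK | split].
Qed.
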